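(* Let $g\mapsto g^*$ be an involution on a group $G$ and let $\sigma\colon G\to\{\pm1\}$ be a group homomorphism (orientation) which is not identically $1$; set $N=\ker\sigma$. Let $R$ be a commutative ring with $1$ and of characteristic different from $2$. For $\alpha=\sum_{g\in G}\alpha_g g\in RG$ define $\alpha^{\sharp}=\sum_{g\in G}\alpha_g\sigma(g)g^*$, and let $(RG)^-=\{\alpha\in RG\mid \alpha^{\sharp}=-\alpha\}$ be the set of skew-symmetric elements. Assume $*$ and $\sigma$ are compatible, i.e. $\sigma(g)=\sigma(g^* )$ for all $g\in G$. If the elements of $(RG)^-$ anticommute, then either (1) $\operatorname{char}R=4$, $G$ is abelian, $*$ is the identity on $N$, and $x^*\ne x$ for all $x\notin N$; or (2) $\operatorname{char}R=4$, $G$ is an SLC group with $*$ the canonical involution, and $x^*\ne x$ for all $x\notin N$. Conversely, if $G$ is a group with an index $2$ subgroup $N$ and $\sigma\colon G\to\{\pm1\}$ is the homomorphism with kernel $N$, then $(RG)^-$ is an anticommutative set in either of the situations (1) or (2).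
   Context: A group $G$ is SLC if it has a unique nonidentity commutator $s$ (necessarily central, with $s^2=1$) and the limited commutativity property: two elements $g,h\in G$ commute only if one of $g$, $h$, $gh$ is central. The canonical involution on an SLC group is $g^*=g$ if $g$ is central and $g^*=sg$ otherwise. The map $\sharp$ is an involution of $RG$ (an oriented group involution). *)

(* groups are MathComp's (possibly infinite) [groupType]
   from boot/monoid.v; the group ring RG is modelled by finitely supported
   functions G -> R (finmap's fsfun with default 0). *)
From HB Require Import structures.
From mathcomp Require Import all_boot all_order all_algebra.
From mathcomp Require Import finmap.
Set Implicit Arguments. Unset Strict Implicit. Unset Printing Implicit Defensive.
Import GRing.Theory.
Local Open Scope ring_scope.

Definition grpring (G : groupType) (R : comRingType) :=
  {fsfun G -> R with 0}.

Definition gr_mulc (G : groupType) (R : comRingType) (a b : grpring G R)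
  (g : G) : R :=
  \sum_(h <- finsupp a) a h * b ((h^-1)%g * g)%g.

Definition is_involution (G : groupType) (star : G -> G) : Prop :=
  (forall g h : G, star (g * h)%g = (star h * star g)%g) /\
  (forall g : G, star (star g) = g).

Definition is_orientation (G : groupType) (sigma : G -> int) : Prop :=
  (forall g : G, sigma g = 1 \/ sigma g = -1) /\
  (forall g h : G, sigma (g * h)%g = sigma g * sigma h).

(* Coefficient of g in alpha^# = sum_h alpha_h sigma(h) h^*  (the unique h with
   h^* = g is h = g^*, as * is an involution). *)
Definition sharpc (G : groupType) (R : comRingType) (star : G -> G)
  (sigma : G -> int) (a : grpring G R) (g : G) : R :=
  a (star g) * (sigma (star g))%:~R.

Definition skew (G : groupType) (R : comRingType) (star : G -> G)
  (sigma : G -> int) (a : grpring G R) : Prop :=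
  forall g : G, sharpc star sigma a g = - a g.

Definition skew_anticommute (G : groupType) (R : comRingType) (star : G -> G)
  (sigma : G -> int) : Prop :=
  forall a b : grpring G R, skew star sigma a -> skew star sigma b ->
    forall g : G, gr_mulc a b g = - gr_mulc b a g.

(* R has characteristic n: n is the additive order of 1 (n = 0 if infinite). *)
Definition ring_char_is (R : comRingType) (n : nat) : Prop :=
  (n%:R = 0 :> R) /\ (forall m : nat, (0 < m)%N -> m%:R = 0 :> R -> (n %| m)%N).

Definition central (G : groupType) (g : G) : Prop :=
  forall h : G, (g * h)%g = (h * g)%g.

Definition abelian_grp (G : groupType) : Prop :=
  forall g h : G, (g * h)%g = (h * g)%g.

Definition SLC_with (G : groupType) (s : G) : Prop :=
  s <> 1%g /\
  (exists x y : G, [~ x, y]%g = s) /\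
  (forall x y : G, [~ x, y]%g = 1%g \/ [~ x, y]%g = s) /\
  (forall g h : G, (g * h)%g = (h * g)%g ->
     central g \/ central h \/ central (g * h)%g).

Definition SLC (G : groupType) : Prop := exists s : G, SLC_with s.

Definition canonical_involution (G : groupType) (s : G) (star : G -> G) : Prop :=
  forall g : G, (central g -> star g = g) /\ (~ central g -> star g = (s * g)%g).

(* Off N = ker sigma the involution has no fixed points: a fixed x would itself be
   skew, and x^2 = -x^2 contradicts 2 != 0.  Hence x + x^* is skew for x outside N,
   and comparing the coefficients of (x + x^* )(y + y^* ) = -(y + y^* )(x + x^* ),
   which are multiplicities between 0 and 8, yields 4 = 0 together with
   x y^* = x^* y, x y = x^* y^* and y x \in {x y, x y^*}.  For a fixed x0 outside N
   these make t = x0^-1 x0^* a central element of order 2 with y^* = t y off N and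
   g^* = x^-1 g x on N (any x outside N); so N is abelian, every commutator lies in
   {1, t}, and G is either abelian with * trivial on N or SLC with commutator t and
   canonical involution.
   Conversely, the coefficient of g in ab + ba is the sum over u of
   a_u (b_(u^-1 g) + b_(g u^-1)); in both situations u |-> u^* exchanges these terms
   with opposite signs (using 4 = 0) and kills those with u^* = u, so they cancel. *)

From Pilot Require Import Defs.
From HB Require Import structures.
From mathcomp Require Import all_boot all_order all_algebra finmap.
From mathcomp Require Import zify ring.
From Stdlib Require Import Classical.
Set Implicit Arguments. Unset Strict Implicit.
Import GRing.Theory.
Local Open Scope fset_scope.
Local Open Scope ring_scope.

Section CharacteristicFour.
Variable R : comRingType.

Lemma natr2_neq0 : ~ ring_char_is R 2 -> 2%:R != 0 :> R.
Proof.
move=> not_char2; apply/eqP=> two0; apply: not_char2; split=> // m _.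
rewrite dvdn2 -{1}(odd_double_half m) natrD -muln2 natrM two0 mulr0 addr0.
by case: (odd m) => //= /eqP; rewrite oner_eq0.
Qed.

Hypotheses (four0 : 4%:R = 0 :> R) (two_neq0 : 2%:R != 0 :> R).

Lemma natr_neq0_lt4 n : (0 < n < 4)%N -> n%:R != 0 :> R.
Proof.
case: n => [|[|[|[|n]]]] //= _; first by rewrite oner_eq0.
apply/eqP=> three0; move/eqP: (oner_neq0 R); apply.
by rewrite -[1]add0r -three0 natr1 four0.
Qed.

Lemma char4 : ring_char_is R 4.
Proof.
split=> // m _ m0; rewrite /dvdn.
have : (m %% 4)%:R = 0 :> R.
  by move: m0; rewrite {1}(divn_eq m 4) natrD natrM four0 mulr0 add0r.
move=> /eqP/(contraTN (@natr_neq0_lt4 (m %% 4))).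
by rewrite lt0n ltn_mod andbT negbK.
Qed.

Lemma sign_double_eq0 (e : int) : e = 1 \/ e = -1 -> 2%:R * (1 + e%:~R) = 0 :> R.
Proof. by case=> ->; rewrite ?subrr ?mulr0 //; rewrite -four0; ring. Qed.

Lemma sign_sub_mul_eq0 (e e' : int) : e = 1 \/ e = -1 -> e' = 1 \/ e' = -1 ->
  (1 - e%:~R) * (1 - e'%:~R) = 0 :> R.
Proof.
by case=> ->; case=> ->; rewrite ?subrr ?mul0r ?mulr0 //; rewrite -four0; ring.
Qed.

End CharacteristicFour.

Section GroupRing.
Variables (G : groupType) (R : comRingType).

Lemma gr_mulcE (a b : grpring G R) g (S : {fset G}) :
  finsupp a `<=` S -> gr_mulc a b g = \sum_(h <- S) a h * b (h^-1 * g)%g.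
Proof.
move=> sub; apply: big_fset_incl => // h _.
by rewrite mem_finsupp negbK => /eqP ->; rewrite mul0r.
Qed.

Definition gr_ind (S : {fset G}) : grpring G R := [fsfun x in S => 1 | 0].

Lemma gr_indE S g : gr_ind S g = (g \in S)%:R.
Proof. by rewrite fsfunE; case: (g \in S). Qed.

Lemma finsupp_gr_ind S : finsupp (gr_ind S) `<=` S.
Proof.
by apply/fsubsetP=> h; rewrite mem_finsupp gr_indE; case: (h \in S); rewrite ?eqxx.
Qed.

Lemma gr_ind1E x g : gr_ind [fset x] g = (g == x)%:R.
Proof. by rewrite gr_indE inE. Qed.

Lemma gr_ind2E x y g : x != y -> gr_ind [fset x; y] g = (g == x)%:R + (g == y)%:R.
Proof.
move=> xy; rewrite gr_indE in_fset2.
by case: eqP => [->|_]; rewrite ?(negbTE xy) ?addr0 ?add0r.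
Qed.

Lemma gr_mulc_ind1 x b g : gr_mulc (gr_ind [fset x]) b g = b (x^-1 * g)%g.
Proof.
by rewrite (gr_mulcE _ _ (finsupp_gr_ind _)) big_seq_fset1 gr_ind1E eqxx mul1r.
Qed.

Lemma gr_mulc_ind2 x y b g : x != y ->
  gr_mulc (gr_ind [fset x; y]) b g = b (x^-1 * g)%g + b (y^-1 * g)%g.
Proof.
move=> xy; rewrite (gr_mulcE _ _ (finsupp_gr_ind _)).
rewrite big_fsetU1 ?inE // big_seq_fset1 !gr_indE !inE !eqxx orbT /=.
by rewrite !mul1r.
Qed.

End GroupRing.

Section InvolutionOrientation.
Variables (G : groupType) (star : G -> G) (sigma : G -> int).
Hypotheses (Hinv : is_involution star) (Hor : is_orientation sigma).
Local Open Scope group_scope.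

Lemma starK : involutive star. Proof. by case: Hinv. Qed.
Lemma starM g h : star (g * h) = star h * star g. Proof. by case: Hinv. Qed.
Lemma star_inj : injective star. Proof. exact: inv_inj starK. Qed.

Lemma star1 : star 1 = 1.
Proof. by apply: (@mulgI _ (star 1)); rewrite -starM !mulg1. Qed.

Lemma starV g : star g^-1 = (star g)^-1.
Proof. by apply: (@mulIg _ (star g)); rewrite mulVg -starM mulgV star1. Qed.

Lemma sigmaM g h : sigma (g * h) = (sigma g * sigma h)%R. Proof. by case: Hor. Qed.
Lemma sigma_pm1 g : sigma g = 1%R \/ sigma g = (-1)%R. Proof. by case: Hor. Qed.

Lemma sigmaV g : sigma g^-1 = sigma g.
Proof.
have sigma1 : sigma 1 = 1%R.
  by have := sigmaM 1 1; rewrite mulg1; case: (sigma_pm1 1) => ->.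
have := sigmaM g g^-1; rewrite mulgV sigma1.
by case: (sigma_pm1 g) => ->; case: (sigma_pm1 g^-1) => ->.
Qed.

End InvolutionOrientation.

Section TwistStructure.
Variables (G : groupType) (star : G -> G) (sigma : G -> int).
Hypotheses (Hinv : is_involution star) (Hor : is_orientation sigma).
Local Open Scope group_scope.
Hypothesis star_odd_neq : forall x, sigma x = (-1)%R -> star x != x.
Hypothesis mul_starr_odd : forall x y, sigma x = (-1)%R -> sigma y = (-1)%R ->
  x * star y = star x * y.
Hypothesis mul_star_odd : forall x y, sigma x = (-1)%R -> sigma y = (-1)%R ->
  x * y = star x * star y.
Hypothesis commute_or_starr : forall x y, sigma x = (-1)%R -> sigma y = (-1)%R ->
  y * x = x * y \/ y * x = x * star y.
Variable x0 : G.
Hypothesis x0_odd : sigma x0 = (-1)%R.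

Let sigmaM := sigmaM Hor.
Let sigmaV := sigmaV Hor.
Let sigma_pm1 := sigma_pm1 Hor.

(* Locked, as group rewrites such as mulgA would otherwise unfold it. *)
Definition twist := locked (x0^-1 * star x0).

Lemma twistE : twist = x0^-1 * star x0. Proof. by rewrite /twist; unlock. Qed.

Lemma star_oddE y : sigma y = (-1)%R -> star y = twist * y.
Proof.
by move=> y_odd; apply: (@mulgI _ x0); rewrite mul_starr_odd // twistE mulgA mulVKg.
Qed.

Let twist_x0 : twist * x0 = x0 * twist.
Proof. by rewrite -star_oddE // twistE mulVKg. Qed.

Lemma twist_sq : twist * twist = 1.
Proof.
have := mul_star_odd x0_odd x0_odd; rewrite !star_oddE //.
have -> : twist * x0 * (twist * x0) = twist * twist * (x0 * x0).
  by rewrite -!mulgA; congr (_ * _); rewrite !mulgA twist_x0.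
by rewrite -{1}(mul1g (x0 * x0)) => /mulIg.
Qed.

Lemma twist_commute_odd y : sigma y = (-1)%R -> twist * y = y * twist.
Proof.
move=> y_odd; have := mul_star_odd y_odd x0_odd; rewrite !star_oddE //.
have -> : twist * y * (twist * x0) = twist * y * twist * x0 by rewrite !mulgA.
move/mulIg => E.
by rewrite [in RHS]E -!mulgA twist_sq mulg1.
Qed.

Lemma twist_central : central twist.
Proof.
move=> g; case: (sigma_pm1 g) => g_even; last exact: twist_commute_odd.
have v_odd : sigma (x0^-1 * g) = (-1)%R by rewrite sigmaM sigmaV x0_odd g_even.
rewrite -(mulVKg x0 g) mulgA twist_x0 -!mulgA (twist_commute_odd v_odd).
by rewrite !mulgA.
Qed.

Lemma twist_neq1 : twist != 1.
Proof.
by apply: contra (star_odd_neq x0_odd) => /eqP t1; rewrite star_oddE // t1 mul1g.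
Qed.

Lemma star_evenE g x : sigma g = 1%R -> sigma x = (-1)%R -> star g = x^-1 * g * x.
Proof.
move=> g_even x_odd; have v_odd : sigma (x^-1 * g) = (-1)%R.
  by rewrite sigmaM sigmaV x_odd g_even.
rewrite -{1}(mulVKg x g) (starM Hinv) !star_oddE // (twist_commute_odd v_odd).
by rewrite -mulgA (mulgA twist) twist_sq mul1g.
Qed.

Lemma even_commute g h : sigma g = 1%R -> sigma h = 1%R -> g * h = h * g.
Proof.
move=> g_even h_even; pose g' := x0 * g * x0^-1.
have g'_even : sigma g' = 1%R by rewrite /g' !sigmaM sigmaV x0_odd g_even.
have x0h_odd : sigma (x0 * h) = (-1)%R by rewrite sigmaM x0_odd h_even.
have := star_evenE g'_even x0h_odd; rewrite (star_evenE g'_even x0_odd) /g'.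
rewrite invgM -!mulgA !mulKg mulVg mulg1 => E.
by rewrite {2}E mulVKg.
Qed.

Lemma star_even_cases g : sigma g = 1%R -> star g = g \/ star g = twist * g.
Proof.
move=> g_even; have v_odd : sigma (x0^-1 * g) = (-1)%R.
  by rewrite sigmaM sigmaV x0_odd g_even.
rewrite (star_evenE g_even x0_odd).
case: (commute_or_starr x0_odd v_odd) => ->; [left|right]; first by rewrite mulVKg.
by rewrite star_oddE // mulgA -twist_x0 -mulgA mulVKg.
Qed.

Lemma central_evenE g : sigma g = 1%R -> central g <-> star g = g.
Proof.
move=> g_even; split=> [g_cent|g_fix h].
  by rewrite (star_evenE g_even x0_odd) -mulgA g_cent mulKg.
case: (sigma_pm1 h) => h_odd; first exact: even_commute.
have := star_evenE g_even h_odd; rewrite g_fix => E.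
by rewrite [in RHS]E mulgA mulVKg.
Qed.

Lemma commute_even_odd g h : sigma g = 1%R -> sigma h = (-1)%R ->
  g * h = h * g \/ g * h = twist * (h * g).
Proof.
move=> g_even h_odd; have E := star_evenE g_even h_odd.
case: (star_even_cases g_even) => Eg; rewrite Eg in E.
  by left; rewrite [in RHS]E mulgA mulVKg.
right; have e : h * (twist * g) = g * h by rewrite E mulgA mulVKg.
by rewrite -e mulgA -(twist_commute_odd h_odd) -mulgA.
Qed.

Lemma commute_or_twist g h : g * h = h * g \/ g * h = twist * (h * g).
Proof.
case: (sigma_pm1 g) => g_par; case: (sigma_pm1 h) => h_par.
- by left; apply: even_commute.
- exact: commute_even_odd.
- case: (commute_even_odd h_par g_par) => E; first by left.
  by right; rewrite E mulgA twist_sq mul1g.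
- case: (commute_or_starr h_par g_par) => E; first by left.
  by right; rewrite E star_oddE // mulgA -(twist_commute_odd h_par) -mulgA.
Qed.

Lemma commg_1_or_twist g h : [~ g, h] = 1 \/ [~ g, h] = twist.
Proof.
rewrite commgEl conjgE.
case: (commute_or_twist g h) => ->; [left|right]; first by rewrite mulKg mulVg.
by rewrite twist_central -mulgA !mulKg.
Qed.

Lemma abelian_of_central_odd x : sigma x = (-1)%R -> central x -> abelian_grp G.
Proof.
move=> x_odd x_cent.
have split_odd a : sigma a = 1%R \/ (sigma (x^-1 * a) = 1%R /\ a = x * (x^-1 * a)).
  case: (sigma_pm1 a) => a_par; [left | right] => //.
  by rewrite mulVKg sigmaM sigmaV x_odd a_par.
have x_mid n m : n * (x * m) = x * (n * m) by rewrite mulgA -x_cent -mulgA.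
move=> a b.
case: (split_odd a) => [a_even|[a_even ->]]; case: (split_odd b) => [b_even|[b_even ->]].
- exact: even_commute.
- by rewrite x_mid -mulgA (even_commute a_even b_even).
- by rewrite x_mid -mulgA (even_commute a_even b_even).
- by rewrite -mulgA x_mid -[in RHS]mulgA x_mid (even_commute a_even b_even).
Qed.

Lemma twist_mulg2 a b : twist * a * (twist * b) = a * b.
Proof. by rewrite twist_central -mulgA (mulgA twist) twist_sq mul1g. Qed.

Lemma limited_commutativity (g h : G) : g * h = h * g ->
  central g \/ central h \/ central (g * h).
Proof.
move=> gh; have gh_even : sigma g = sigma h -> sigma (g * h) = 1%R.
  by rewrite sigmaM => ->; case: (sigma_pm1 h) => ->.
case: (sigma_pm1 g) => g_par; case: (sigma_pm1 h) => h_par.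
- case: (star_even_cases g_par) => eg; first by left; apply/central_evenE.
  case: (star_even_cases h_par) => eh; first by right; left; apply/central_evenE.
  right; right; apply/(central_evenE (gh_even _)); first by rewrite g_par h_par.
  by rewrite (starM Hinv) eg eh twist_mulg2.
- left; apply/(central_evenE g_par).
  by rewrite (star_evenE g_par h_par) -mulgA gh mulKg.
- right; left; apply/(central_evenE h_par).
  by rewrite (star_evenE h_par g_par) -mulgA -gh mulKg.
- right; right; apply/(central_evenE (gh_even _)); first by rewrite g_par h_par.
  by rewrite (starM Hinv) !star_oddE // twist_mulg2.
Qed.

Lemma canonical_involution_twist : ~ abelian_grp G -> canonical_involution twist star.
Proof.
move=> nab g; case: (sigma_pm1 g) => g_par; split.
- by move/(central_evenE g_par).
- move=> g_ncent; case: (star_even_cases g_par) => // g_fix.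
  by case: g_ncent; apply/(central_evenE g_par).
- by move=> g_cent; case: nab; exact: (abelian_of_central_odd g_par).
- by move=> _; rewrite star_oddE.
Qed.

Lemma SLC_twist : ~ abelian_grp G -> SLC_with twist.
Proof.
move=> nab; split; first exact/eqP/twist_neq1.
split; last by split; [exact: commg_1_or_twist | exact: limited_commutativity].
have [g /not_all_ex_not [h gh]] : exists g : G, ~ central g.
  apply: not_all_ex_not => all_cent; apply: nab => a b; exact: all_cent.
exists g, h; case: (commg_1_or_twist g h) => // /eqP gh1; case: gh.
exact/(@commgP _ g h).
Qed.

Lemma abelian_or_SLC :
  (abelian_grp G /\ forall x, sigma x = 1%R -> star x = x) \/
  (exists s, SLC_with s /\ canonical_involution s star).
Proof.
case: (classic (abelian_grp G)) => [abG | nab]; [left | right].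
  split=> // x x_even.
  by rewrite (star_evenE x_even x0_odd) -mulgA (abG x x0) mulKg.
by exists twist; split; [exact: SLC_twist | exact: canonical_involution_twist].
Qed.

End TwistStructure.

Lemma eq_mulVg (G : groupType) (x g y : G) : (x^-1 * g == y)%g = (g == x * y)%g.
Proof. by apply/eqP/eqP => [<-|->]; [rewrite mulVKg | rewrite mulKg]. Qed.

Lemma eqb_add_leq1 (T : eqType) (w u v : T) : u != v -> ((w == u) + (w == v) <= 1)%N.
Proof.
by move=> uv; case: (w =P u) => [->|_] /=; [rewrite (negbTE uv) | case: (w == v)].
Qed.

Section SkewAnticommuting.
Variables (G : groupType) (R : comRingType) (star : G -> G) (sigma : G -> int).
Hypotheses (Hinv : is_involution star) (Hor : is_orientation sigma).
Hypothesis Hcomp : forall g, sigma (star g) = sigma g.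
Hypothesis Hac : skew_anticommute R star sigma.
Hypothesis two_neq0 : 2%:R != 0 :> R.

Let star_eq := inj_eq (star_inj Hinv).

Lemma skew_ind1 x : sigma x = -1 -> star x = x ->
  Defs.skew star sigma (@gr_ind G R [fset x]).
Proof.
move=> x_odd x_fix g; rewrite /sharpc !gr_ind1E -{1}x_fix star_eq Hcomp.
by case: (g =P x) => [->|_]; rewrite ?x_odd ?mulrN1 ?mul0r ?oppr0.
Qed.

Lemma skew_ind2 x : sigma x = -1 -> star x != x ->
  Defs.skew star sigma (@gr_ind G R [fset x; star x]).
Proof.
move=> x_odd x_nfix g; have x_nfix' : x != star x by rewrite eq_sym.
rewrite /sharpc !gr_ind2E // star_eq -{1}(starK Hinv x) star_eq Hcomp.
case: (g =P x) => [->|gx].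
  by rewrite x_odd eq_sym (negbTE x_nfix) mulrN1 add0r addr0.
case: (g =P star x) => [->|gx'] /=; first by rewrite Hcomp x_odd mulrN1 add0r addr0.
by rewrite add0r mul0r oppr0.
Qed.

Lemma star_odd_neq x : sigma x = -1 -> star x != x.
Proof.
move=> x_odd; apply/eqP=> x_fix.
have := Hac (skew_ind1 x_odd x_fix) (skew_ind1 x_odd x_fix) (x * x)%g.
rewrite gr_mulc_ind1 gr_ind1E mulKg eqxx /= => /eqP.
by rewrite -addr_eq0 -mulr2n; apply/negP.
Qed.

Local Open Scope group_scope.

(* The coefficient of g in (x + x^* )(y + y^* ) + (y + y^* )(x + x^* ). *)
Lemma anticomm_count x y g : sigma x = (-1)%R -> sigma y = (-1)%R ->
  ((g == (x * y)%g) + (g == (x * star y)%g) + (g == (star x * y)%g)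
  + (g == (star x * star y)%g) + (g == (y * x)%g) + (g == (y * star x)%g)
  + (g == (star y * x)%g) + (g == (star y * star x)%g))%N%:R = 0 :> R.
Proof.
move=> x_odd y_odd.
have x_skew := skew_ind2 x_odd (star_odd_neq x_odd).
have y_skew := skew_ind2 y_odd (star_odd_neq y_odd).
have nx : x != star x by rewrite eq_sym star_odd_neq.
have ny : y != star y by rewrite eq_sym star_odd_neq.
move: (Hac x_skew y_skew g) => /eqP.
rewrite -addr_eq0 !gr_mulc_ind2 // !gr_ind2E // !eq_mulVg => /eqP <-.
by rewrite !natrD !addrA.
Qed.

Lemma four_eq0 x : sigma x = (-1)%R -> 4%:R = 0 :> R.
Proof.
move=> x_odd; have nx := star_odd_neq x_odd.
have := anticomm_count (x * star x) x_odd x_odd.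
have e1 : (x * star x == x * x) = false by rewrite (inj_eq (mulgI x)) (negbTE nx).
have e2 : (x * star x == star x * star x) = false.
  by rewrite (inj_eq (mulIg (star x))) eq_sym (negbTE nx).
rewrite eqxx e1 e2.
by case: (x * star x == star x * x) => // /eqP; rewrite (negbTE two_neq0).
Qed.

Hypothesis four0 : 4%:R = 0 :> R.

Let count_contra n : n%:R = 0 :> R -> (0 < n < 4)%N -> False.
Proof. by move=> n0 /(natr_neq0_lt4 four0 two_neq0); rewrite n0 eqxx. Qed.

Let mulg_neq (z u v : G) : u != v -> z * u != z * v.
Proof. by rewrite (inj_eq (mulgI z)). Qed.

Lemma mul_starr_odd x y : sigma x = (-1)%R -> sigma y = (-1)%R ->
  x * star y = star x * y.
Proof.
move=> x_odd y_odd; apply/eqP/negPn/negP => neq.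
have nx := star_odd_neq x_odd; have ny := star_odd_neq y_odd.
have := anticomm_count (x * star y) x_odd y_odd.
have e1 : (x * star y == x * y) = false by rewrite (inj_eq (mulgI x)) (negbTE ny).
have e2 : (x * star y == star x * star y) = false.
  by rewrite (inj_eq (mulIg (star y))) eq_sym (negbTE nx).
rewrite eqxx e1 e2 (negbTE neq) => /count_contra; apply.
have := eqb_add_leq1 (x * star y) (mulg_neq y nx).
have := eqb_add_leq1 (x * star y) (mulg_neq (star y) nx).
lia.
Qed.

Lemma mul_star_odd x y : sigma x = (-1)%R -> sigma y = (-1)%R ->
  x * y = star x * star y.
Proof.
move=> x_odd y_odd; apply/eqP/negPn/negP => neq.
have nx := star_odd_neq x_odd; have ny := star_odd_neq y_odd.
have := anticomm_count (x * y) x_odd y_odd.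
have e1 : (x * y == x * star y) = false.
  by rewrite (inj_eq (mulgI x)) eq_sym (negbTE ny).
have e2 : (x * y == star x * y) = false.
  by rewrite (inj_eq (mulIg y)) eq_sym (negbTE nx).
rewrite eqxx e1 e2 (negbTE neq) => /count_contra; apply.
have := eqb_add_leq1 (x * y) (mulg_neq y nx).
have := eqb_add_leq1 (x * y) (mulg_neq (star y) nx).
lia.
Qed.

Lemma commute_or_starr x y : sigma x = (-1)%R -> sigma y = (-1)%R ->
  y * x = x * y \/ y * x = x * star y.
Proof.
move=> x_odd y_odd; have nx := star_odd_neq x_odd; have ny := star_odd_neq y_odd.
case: (y * x =P x * y) => [|ne1]; first by left.
case: (y * x =P x * star y) => [|ne2]; first by right.
exfalso; have := anticomm_count (y * x) x_odd y_odd.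
rewrite -(mul_starr_odd x_odd y_odd) -(mul_star_odd x_odd y_odd).
have e1 : (y * x == y * star x) = false by rewrite (inj_eq (mulgI y)) eq_sym (negbTE nx).
have e2 : (y * x == star y * x) = false by rewrite (inj_eq (mulIg x)) eq_sym (negbTE ny).
rewrite eqxx e1 e2 (introF eqP ne1) (introF eqP ne2) => /count_contra; apply.
by case: (y * x == star y * star x).
Qed.

Lemma skew_anticommute_structure x0 : sigma x0 = (-1)%R ->
  (abelian_grp G /\ forall x, sigma x = 1%R -> star x = x) \/
  (exists s, SLC_with s /\ canonical_involution s star).
Proof.
exact: (abelian_or_SLC Hinv Hor star_odd_neq mul_starr_odd mul_star_odd commute_or_starr).
Qed.

End SkewAnticommuting.


Lemma sum_antisym_involution_eq0 (T : choiceType) (V : zmodType) (tau : T -> T)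
    (F : T -> V) :
  involutive tau -> (forall x, F (tau x) = - F x) -> (forall x, tau x = x -> F x = 0) ->
  forall S : {fset T}, (forall x, x \in S -> tau x \in S) -> \sum_(x <- S) F x = 0.
Proof.
move=> tauK F_odd F_fix S; move: {2}#|`S| (leqnn #|`S|) => n.
elim: n S => [|n IH] S S_size S_stable.
  by move: S_size; rewrite leqn0 => /eqP/cardfs0_eq ->; rewrite big_seq_fset0.
have [->|/fset0Pn [x xS]] := eqVneq S fset0; first by rewrite big_seq_fset0.
have card_x := cardfsD1 x S; rewrite xS in card_x.
have tau_neq y z : y != z -> tau y != tau z by rewrite (inj_eq (can_inj tauK)).
rewrite (big_fsetD1 _ xS) /=.
have [tx|ntx] := eqVneq (tau x) x.
  rewrite (F_fix x tx) add0r IH //; first by move: S_size; rewrite card_x.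
  move=> y; rewrite !inE => /andP [yx yS]; rewrite S_stable // andbT.
  by rewrite -[X in _ != X]tx tau_neq.
have txS : tau x \in S `\ x by rewrite !inE ntx S_stable.
rewrite (big_fsetD1 _ txS) /= F_odd addrA addrN add0r.
have card_tx := cardfsD1 (tau x) (S `\ x); rewrite txS in card_tx.
apply: IH; first by move: S_size; rewrite card_x card_tx; lia.
move=> y; rewrite !inE => /and3P [ytx yx yS].
by rewrite tau_neq // -[X in _ != X](tauK x) tau_neq // S_stable.
Qed.

Section AnticommutePairing.
Variables (G : groupType) (R : comRingType).
Local Open Scope group_scope.

Definition pair_term (a b : grpring G R) (g u : G) : R :=
  (a u * (b (u^-1 * g)%g + b (g * u^-1)%g))%R.

Lemma gr_mulc_anticomm_pairing (a b : grpring G R) g (tau : G -> G) :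
  involutive tau -> (forall u, pair_term a b g (tau u) = - pair_term a b g u) ->
  (forall u, tau u = u -> pair_term a b g u = 0) ->
  gr_mulc a b g = - gr_mulc b a g.
Proof.
move=> tauK F_odd F_fix.
pose A := finsupp a `|` [fset h^-1 * g | h in finsupp b].
pose S := A `|` [fset tau x | x in A].
have S_stable x : x \in S -> tau x \in S.
  case/fsetUP => [xA|/imfsetP [y yA ->]]; apply/fsetUP; last by left; rewrite tauK.
  by right; apply: in_imfset.
have ab_sum : gr_mulc a b g = \sum_(u <- S) a u * b (u^-1 * g)%g.
  by apply: gr_mulcE; apply/fsubsetP => x xa; rewrite !in_fsetU xa.
have ba_sum : gr_mulc b a g = \sum_(u <- S) a u * b (g * u^-1)%g.
  rewrite (@gr_mulcE _ _ b a g [fset g * u^-1 | u in S]).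
    rewrite big_imfset /=; last by move=> u v _ _ /mulgI /invg_inj.
    by apply: eq_bigr => u _; rewrite invgM invgK mulgVK mulrC.
  apply/fsubsetP => h hb; apply/imfsetP; exists (h^-1 * g).
    by rewrite /= !in_fsetU (in_imfset _ (fun h => h^-1 * g) hb) orbT.
  by rewrite invgM invgK mulgA mulgV mul1g.
apply/eqP; rewrite -addr_eq0 ab_sum ba_sum -big_split /=; apply/eqP.
under eq_bigr do rewrite -mulrDr.
exact: (sum_antisym_involution_eq0 tauK F_odd F_fix S_stable).
Qed.

End AnticommutePairing.

Section SkewCoefficients.
Variables (G : groupType) (R : comRingType) (star : G -> G) (sigma : G -> int).
Hypothesis Hcomp : forall g, sigma (star g) = sigma g.
Variable c : grpring G R.
Hypothesis c_skew : Defs.skew star sigma c.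

Lemma skew_coefE h : c (star h) * (sigma h)%:~R = - c h.
Proof. by have := c_skew h; rewrite /sharpc Hcomp. Qed.

Lemma skew_coef_odd h : sigma h = -1 -> c (star h) = c h.
Proof. by move=> h_odd; have := skew_coefE h; rewrite h_odd mulrN1 => /oppr_inj. Qed.

Lemma skew_coef_fixed h : sigma h = 1 -> star h = h -> c h + c h = 0.
Proof.
move=> h_even h_fix; have := skew_coefE h; rewrite h_even mulr1 h_fix => E.
by rewrite {1}E addNr.
Qed.

End SkewCoefficients.

Section AbelianConverse.
Variables (G : groupType) (R : comRingType) (star : G -> G) (sigma : G -> int).
Hypotheses (Hinv : is_involution star) (Hor : is_orientation sigma).
Hypothesis Hcomp : forall g, sigma (star g) = sigma g.
Hypothesis four0 : 4%:R = 0 :> R.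
Local Open Scope group_scope.

Lemma skew_anticommute_abelian : abelian_grp G ->
  (forall x, sigma x = 1%R -> star x = x) -> (forall x, sigma x <> 1%R -> star x <> x) ->
  skew_anticommute R star sigma.
Proof.
move=> abG star_even star_odd a b a_skew b_skew g.
have pair_termE u : pair_term a b g u = (a u * (b (u^-1 * g)%g + b (u^-1 * g)%g))%R.
  by rewrite /pair_term (abG g).
apply: (gr_mulc_anticomm_pairing (starK Hinv)) => u; rewrite !pair_termE.
- case: (sigma_pm1 Hor u) => u_par.
    by rewrite star_even // mulrDr -mulrDl (skew_coef_fixed Hcomp a_skew u_par)
      ?star_even // mul0r oppr0.
  rewrite (skew_coef_odd Hcomp a_skew u_par).
  case: (sigma_pm1 Hor g) => g_par.
    have v_odd : sigma (u^-1 * g) = (-1)%R.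
      by rewrite (sigmaM Hor) (sigmaV Hor) u_par g_par.
    have -> : (star u)^-1 * g = star (u^-1 * g).
      by rewrite (starM Hinv) (star_even _ g_par) (starV Hinv) abG.
    rewrite (skew_coef_odd Hcomp b_skew v_odd); apply/eqP; rewrite -addr_eq0; apply/eqP.
    transitivity (a u * b (u^-1 * g)%g * 4%:R)%R; first by ring.
    by rewrite four0 mulr0.
  have v_even w : sigma w = (-1)%R -> sigma (w^-1 * g) = 1%R.
    by move=> w_odd; rewrite (sigmaM Hor) (sigmaV Hor) w_odd g_par.
  have b_half w : sigma w = (-1)%R -> (b (w^-1 * g)%g + b (w^-1 * g)%g = 0)%R.
    move=> w_odd; rewrite (skew_coef_fixed Hcomp b_skew (v_even _ w_odd)) //.
    exact/star_even/v_even.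
  by rewrite !b_half ?Hcomp // mulr0 oppr0.
- move=> u_fix; case: (sigma_pm1 Hor u) => u_par.
    by rewrite mulrDr -mulrDl (skew_coef_fixed Hcomp a_skew u_par u_fix) mul0r.
  by case: (star_odd u); rewrite ?u_par.
Qed.

End AbelianConverse.

Section SLCConverse.
Variables (G : groupType) (R : comRingType) (star : G -> G) (sigma : G -> int) (s : G).
Hypotheses (Hinv : is_involution star) (Hor : is_orientation sigma).
Hypothesis Hcomp : forall g, sigma (star g) = sigma g.
Hypothesis four0 : 4%:R = 0 :> R.
Hypotheses (s_SLC : SLC_with s) (star_can : canonical_involution s star).
Hypothesis star_odd : forall x, sigma x <> 1%R -> star x <> x.
Local Open Scope group_scope.

Lemma star_central w : central w -> star w = w.
Proof. by case: (star_can w) => + _; apply. Qed.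

Lemma star_noncentral w : ~ central w -> star w = s * w.
Proof. by case: (star_can w) => _; apply. Qed.

Lemma SLC_central : central s.
Proof.
case: s_SLC => s_neq1 [[x [y xy_s]] [comm_1s _]] z.
case: (comm_1s (x ^ z) (y ^ z)); rewrite -conjRg xy_s => E.
  by case: s_neq1; move/eqP: E; rewrite conjg_eq1 => /eqP.
by rewrite -[in RHS]E conjgE mulVKg.
Qed.

Lemma SLC_commute_or x y : x * y = y * x \/ x * y = s * (y * x).
Proof.
case: s_SLC => _ [_ [comm_1s _]]; case: (comm_1s x y) => E.
  by left; apply/commgP; rewrite E.
by right; rewrite commgC E SLC_central.
Qed.

Lemma SLC_sq : s * s = 1.
Proof.
case: s_SLC => s_neq1 [[x [y xy_s]] _].
have x_ncent : ~ central x.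
  by move=> x_cent; apply: s_neq1; rewrite -xy_s commgEl conjgE x_cent mulKg mulVg.
have sx_ncent : ~ central (s * x).
  move=> sx_cent; apply: x_ncent => h; apply: (@mulgI _ s).
  by rewrite mulgA sx_cent mulgA -SLC_central -mulgA.
have := starK Hinv x; rewrite (star_noncentral x_ncent) (star_noncentral sx_ncent).
by rewrite mulgA -{2}(mul1g x) => /mulIg.
Qed.

Lemma central_sM x : central x -> central (s * x).
Proof. by move=> x_cent h; rewrite -mulgA (x_cent h) mulgA (SLC_central h) -mulgA. Qed.

Lemma central_even w : central w -> sigma w = 1%R.
Proof.
move=> w_cent; case: (sigma_pm1 Hor w) => // w_odd.
by case: (star_odd (x := w)); [rewrite w_odd | exact: star_central].
Qed.

Section SkewSLC.
Variables (c : grpring G R).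
Hypothesis c_skew : Defs.skew star sigma c.

Lemma skew_coef_central w : central w -> (c w + c w = 0)%R.
Proof.
move=> w_cent.
exact: (skew_coef_fixed Hcomp c_skew (central_even w_cent) (star_central w_cent)).
Qed.

Lemma skew_coef_noncentral w : ~ central w -> c (s * w) = (- (c w * (sigma w)%:~R))%R.
Proof.
move=> w_ncent; have := skew_coefE Hcomp c_skew w; rewrite (star_noncentral w_ncent).
case: (sigma_pm1 Hor w) => -> E; rewrite ?mulr1 ?mulrN1 ?opprK in E * => //.
exact: oppr_inj.
Qed.

End SkewSLC.

Lemma skew_anticommute_SLC : skew_anticommute R star sigma.
Proof.
move=> a b a_skew b_skew g.
have [s_neq1 _] := s_SLC.
have sV : s^-1 = s by apply: (@mulgI _ s); rewrite mulgV SLC_sq.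
have pair_term_central u : central u -> pair_term a b g u = 0%R.
  move=> u_cent; rewrite /pair_term; have -> : g * u^-1 = u^-1 * g.
    by apply: (@mulgI _ u); rewrite mulVKg mulgA (u_cent g) mulgK.
  by rewrite mulrDr -mulrDl (skew_coef_central a_skew u_cent) mul0r.
apply: (gr_mulc_anticomm_pairing (starK Hinv)) => u; last first.
  move=> u_fix; apply: pair_term_central; apply: NNPP => u_ncent; apply: s_neq1.
  by apply: (@mulIg _ u); rewrite -(star_noncentral u_ncent) u_fix mul1g.
case: (classic (central u)) => [u_cent|u_ncent].
  by rewrite star_central // pair_term_central // oppr0.
rewrite (star_noncentral u_ncent) /pair_term (skew_coef_noncentral a_skew u_ncent).
rewrite -(mulVKg u g) mulKg; move: (u^-1 * g) => v.
have -> : (s * u)^-1 * (u * v) = s * v.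
  by rewrite invgM sV -(SLC_central u^-1) -mulgA mulKg.
have -> : u * v * (s * u)^-1 = s * (u * v * u^-1).
  by rewrite invgM sV mulgA (SLC_central (u * v * u^-1)).
case: (classic (central v)) => [v_cent|v_ncent].
  have -> : u * v * u^-1 = v by rewrite -(v_cent u) mulgK.
  by rewrite !(skew_coef_central b_skew) ?mulr0 ?oppr0 //; exact: central_sM.
apply/eqP; rewrite -addr_eq0; apply/eqP.
have e_pm1 := sigma_pm1 Hor.
case: (SLC_commute_or u v) => uv.
  have -> : u * v * u^-1 = v by rewrite uv mulgK.
  rewrite (skew_coef_noncentral b_skew v_ncent).
  transitivity (a u * b v * (2%:R * (1 + (sigma (u * v))%:~R)))%R.
    by rewrite (sigmaM Hor) intrM; ring.
  by rewrite (sign_double_eq0 four0 (e_pm1 _)) mulr0.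
have -> : u * v * u^-1 = s * v by rewrite uv mulgA mulgK.
rewrite mulgA SLC_sq mul1g (skew_coef_noncentral b_skew v_ncent).
transitivity (a u * b v * ((1 - (sigma u)%:~R) * (1 - (sigma v)%:~R)))%R; first by ring.
by rewrite (sign_sub_mul_eq0 four0 (e_pm1 _) (e_pm1 _)) mulr0.
Qed.

End SLCConverse.

Unset Implicit Arguments.

Theorem mainTheorem1 (G : groupType) (R : comRingType)
  (star : G -> G) (sigma : G -> int) :
  is_involution star ->
  is_orientation sigma ->
  (exists g : G, sigma g <> 1) ->
  (forall g : G, sigma (star g) = sigma g) ->
  ~ ring_char_is R 2 ->
  skew_anticommute R star sigma <->
  ( (ring_char_is R 4 /\ abelian_grp G /\
       (forall x : G, sigma x = 1 -> star x = x) /\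
       (forall x : G, sigma x <> 1 -> star x <> x))
  \/ (ring_char_is R 4 /\
       (exists s : G, SLC_with s /\ canonical_involution s star) /\
       (forall x : G, sigma x <> 1 -> star x <> x)) ).
Proof.
move=> Hinv Hor [x0 x0_neq1] Hcomp not_char2.
have x0_odd : sigma x0 = -1 by case: (sigma_pm1 Hor x0) x0_neq1.
have two_neq0 := natr2_neq0 not_char2.
split=> [Hac | [[[four0 _] [abG [star_even star_odd]]]
                | [[four0 _] [[s [s_SLC s_can]] star_odd]]]].
- have four0 := four_eq0 Hinv Hcomp Hac two_neq0 x0_odd.
  have star_odd x : sigma x <> 1 -> star x <> x.
    move=> x_odd; apply/eqP/(star_odd_neq Hinv Hcomp Hac two_neq0).
    by case: (sigma_pm1 Hor x) x_odd.
  have [[abG star_even] | SLC_can] :=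
    skew_anticommute_structure Hinv Hor Hcomp Hac two_neq0 four0 x0_odd.
    by left; split; [exact: char4 | split].
  by right; split; [exact: char4 | split].
- exact: skew_anticommute_abelian Hinv Hor Hcomp four0 abG star_even star_odd.
- exact: skew_anticommute_SLC Hinv Hor Hcomp four0 s_SLC s_can star_odd.
Qed.
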